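(* Let $n,m$ be positive integers and $\mathbf a,\mathbf b\in\mathbb N^n$ with $a_1+\cdots+a_i\ge b_1+\cdots+b_i$ for all $i$. There is a bijection between the set of plane partitions of skew shape $\theta(\mathbf a,\mathbf b)$ with all entries in $\{0,1,\dots,m\}$ and the set of integral points (integer-valued flows) of $\mathcal F_{G(n,m)}(\mathbf a,\mathbf b)$.
   Context: $\theta(\mathbf a,\mathbf b)=\lambda/\mu$ where $\lambda=(a_1+\cdots+a_n,\ldots,a_1+a_2,a_1)$ and $\mu=(b_1+\cdots+b_n,\ldots,b_1+b_2,b_1)$ (the dominance hypothesis ensures $\mu\subseteq\lambda$). A plane partition of skew shape $\lambda/\mu$ is a filling of the cells $(i,j)$, $\mu_i<j\le\lambda_i$, by nonnegative integers that weakly decrease along each row (left to right) and down each column. $G(n,m)$ is the directed graph with vertex set $\{(i,j):1\le i\le n,\ 0\le j\le m\}\cup\{s\}$ and edges $((i,j),(i,j+1))$ for $1\le i\le n$, $0\le j\le m-1$; $((i,j),(i+1,j))$ for $1\le i\le n-1$, $0\le j\le m$; and $((n,j),s)$ for $0\le j\le m$. $\mathcal F_{G(n,m)}(\mathbf a,\mathbf b)$ is the set of nonnegative real edge weightings $f$ such that at each vertex, outflow minus inflow equals its netflow: $a_i$ at $(i,0)$, $-b_i$ at $(i,m)$, $-\sum_i a_i+\sum_i b_i$ at $s$, and $0$ elsewhere. *)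

From mathcomp Require Import all_boot all_order all_algebra.
Set Implicit Arguments. Unset Strict Implicit. Unset Printing Implicit Defensive.

(* Conventions: a, b are sequences of naturals of length n; a_i (1-indexed)
   is [nth 0 a (i-1)].  [psum s k] = s_1 + ... + s_k. *)
Definition psum (s : seq nat) (k : nat) : nat := \sum_(i < k) nth 0 s i.

Definition lam (n : nat) (a : seq nat) (r : nat) : nat := psum a (n.+1 - r).
Definition mu (n : nat) (b : seq nat) (r : nat) : nat := psum b (n.+1 - r).

Definition in_shape (n : nat) (a b : seq nat) (r j : nat) : bool :=
  (1 <= r <= n) && (mu n b r < j <= lam n a r).

(* A plane partition of shape theta(a,b) with entries in {0..m}, encoded as a
   function on N x N that vanishes outside the shape (canonical encoding of a
   filling of the cells). *)
Definition is_pp (n m : nat) (a b : seq nat) (p : nat -> nat -> nat) : Prop :=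
  [/\ (forall r j, ~~ in_shape n a b r j -> p r j = 0),
      (forall r j, in_shape n a b r j -> p r j <= m),
      (forall r j j', in_shape n a b r j -> in_shape n a b r j' -> j <= j' ->
          p r j' <= p r j)
    & (forall r r' j, in_shape n a b r j -> in_shape n a b r' j -> r <= r' ->
          p r' j <= p r j)].

Definition PP (n m : nat) (a b : seq nat) := {p : nat -> nat -> nat | is_pp n m a b p}.

(* Vertices: [Some (i,j)] is (i,j) (1 <= i <= n, 0 <= j <= m); [None] is s. *)
Definition vert := option (nat * nat).
Definition edge := (vert * vert)%type.

Definition verts (n m : nat) : seq vert :=
  None :: [seq Some (i, j) | i <- iota 1 n, j <- iota 0 m.+1].

Definition edges (n m : nat) : seq edge :=
  [seq (Some (i, j), Some (i, j.+1)) | i <- iota 1 n, j <- iota 0 m]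
  ++ [seq (Some (i, j), Some (i.+1, j)) | i <- iota 1 n.-1, j <- iota 0 m.+1]
  ++ [seq (Some (n, j), None) | j <- iota 0 m.+1].

Definition netflow (n m : nat) (f : edge -> nat) (x : vert) : int :=
  (\sum_(e <- edges n m | e.1 == x) Posz (f e) - \sum_(e <- edges n m | e.2 == x) Posz (f e))%R.

Definition demand (n m : nat) (a b : seq nat) (x : vert) : int :=
  match x with
  | None => (- Posz (psum a n) + Posz (psum b n))%R
  | Some (i, j) =>
      if j == 0 then Posz (nth 0 a i.-1)
      else if j == m then (- Posz (nth 0 b i.-1))%R
      else 0%R
  end.

Definition is_int_flow (n m : nat) (a b : seq nat) (f : edge -> nat) : Prop :=
  (forall e, e \notin edges n m -> f e = 0) /\
  (forall x, x \in verts n m -> netflow n m f x = demand n m a b x).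

Definition IntFlow (n m : nat) (a b : seq nat) := {f : edge -> nat | is_int_flow n m a b f}.

(* A plane partition of shape lambda/mu with entries at most m is the same as a
   chain of shapes mu = nu^(m+1) <= nu^m <= ... <= nu^1 <= nu^0 = lambda, where nu^k
   consists of mu and the cells with entry >= k.  Recording row lengths, such a chain
   is an array c k i (0 <= k <= m+1, 0 <= i <= n), c k i being the length of row
   n+1-i of nu^k; the arrays that arise are exactly those that increase in i, decrease
   in k, and have the partial sums of a and b as rows 0 and m+1.  Such an array gives
   the flow carrying c (j+1) i - c (j+1) (i-1) along (i,j) -> (i,j+1) and
   c j i - c (j+1) i along the edge leaving (i,j) downwards (to (i+1,j), or to s when
   i = n): conservation at each vertex is a telescoping identity.  Conversely, c k i
   is read off a flow as the total flow entering column k through rows 1, ..., i. *)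

From mathcomp Require Import all_boot all_order all_algebra.
From mathcomp Require Import zify.
From Stdlib Require Import FunctionalExtensionality ProofIrrelevance.
Set Implicit Arguments. Unset Strict Implicit. Unset Printing Implicit Defensive.
Import GRing.Theory.

Lemma count_iota_prefix (Q : pred nat) s l j :
  (forall x y, s <= x <= y -> y < s + l -> Q y -> Q x) ->
  s <= j < s + l -> Q j = (j < s + count Q (iota s l)).
Proof.
elim: l s => [|l IH] s Qdown hj; first lia.
rewrite /=; case Qs: (Q s) => /=.
  case: (eqVneq j s) => [-> | ne_js]; first by rewrite Qs; lia.
  rewrite (IH s.+1) ?addSnnS //; last lia.
  by move=> x y hxy hy; apply: Qdown; lia.
have notQ x : s <= x < s + l.+1 -> Q x = false.
  by move=> hx; apply: contraFF Qs => Qx; apply: Qdown Qx; lia.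
rewrite notQ // (@eq_in_count _ _ pred0) ?count_pred0; first lia.
by move=> x; rewrite mem_iota => hx; apply: notQ; lia.
Qed.

Lemma count_leq_iota c s l :
  s <= c <= s + l -> count (fun j => j <= c) (iota s.+1 l) = c - s.
Proof.
move=> hc; rewrite -(subnKC (_ : c - s <= l)); last lia.
rewrite iotaD count_cat (@eq_in_count _ _ predT); last first.
  by move=> x; rewrite mem_iota /=; lia.
rewrite count_predT size_iota (@eq_in_count _ _ pred0) ?count_pred0 ?addn0 //.
by move=> x; rewrite mem_iota /=; lia.
Qed.

Lemma sub_in_count (T : eqType) (a1 a2 : pred T) (s : seq T) :
  {in s, subpred a1 a2} -> count a1 s <= count a2 s.
Proof.
elim: s => //= x s IH s12; apply: leq_add.
  by case a1x: (a1 x) => //; rewrite s12 // mem_head.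
by apply: IH => y ys; apply: s12; rewrite in_cons ys orbT.
Qed.

Lemma psumS s i : psum s i.+1 = psum s i + nth 0 s i.
Proof. by rewrite /psum big_ord_recr. Qed.

Lemma psum_mono s i i' : i <= i' -> psum s i <= psum s i'.
Proof. by move=> hi; rewrite /psum -!(big_mkord xpredT) (big_cat_nat (leq0n i) hi) leq_addr. Qed.

Lemma sum_seq_pred1 (V : nmodType) (T : eqType) (s : seq T) x0 (G : T -> V) : uniq s ->
  (\sum_(x <- s) (if x == x0 then G x else 0) = if x0 \in s then G x0 else 0)%R.
Proof.
move=> us; rewrite -big_mkcond /=; case: ifP => xs.
  by rewrite -big_filter (filter_pred1_uniq us xs) big_seq1.
by rewrite big_hasC //; apply/hasPn => x xs'; apply: contraFN xs => /eqP <-.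
Qed.

Lemma sum_allpairs_pred1 (V : nmodType) (S T : eqType) (U : Type) (s : seq S) (t : seq T)
    (h : S -> T -> U) (P : pred U) (F : U -> V) (g : bool) x0 y0 :
  uniq s -> uniq t -> (forall x y, x \in s -> P (h x y) = [&& g, x == x0 & y == y0]) ->
  (\sum_(e <- [seq h x y | x <- s, y <- t] | P e) F e
   = if [&& g, x0 \in s & y0 \in t] then F (h x0 y0) else 0)%R.
Proof.
move=> us ut hP; rewrite big_mkcond big_allpairs_dep /=.
under eq_big_seq => x xs do under eq_bigr => y _ do rewrite hP //.
case: g {hP} => /=; last by rewrite big1 // => x _; rewrite big1.
transitivity (\sum_(x <- s) if x == x0 then
                 \sum_(y <- t) (if y == y0 then F (h x y) else 0) else 0)%R.
  by apply: eq_bigr => x _; case: eqP => //= _; rewrite big1.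
by rewrite sum_seq_pred1 // sum_seq_pred1 //; case: (x0 \in s).
Qed.
Arguments sum_allpairs_pred1 {V S T U s t h P F} g x0 y0.


Lemma eq_vertex (x y i j : nat) : (Some (x, y) == Some (i, j) :> vert) = (x == i) && (y == j).
Proof. by []. Qed.

Definition right_edge (i j : nat) : edge := (Some (i, j), Some (i, j.+1)).
Definition down_edge (n i j : nat) : edge :=
  (Some (i, j), if i < n then Some (i.+1, j) else None).

Section Edges.
Variables (n m : nat).

Lemma mem_verts i j : 0 < i <= n -> j <= m -> Some (i, j) \in verts n m.
Proof.
move=> hi hj; rewrite /verts in_cons; apply/orP; right.
by apply: (allpairs_f (fun i j => Some (i, j) : vert)); rewrite mem_iota; lia.
Qed.

Lemma vertsP x : x \in verts n m ->
  x = None \/ exists i j, [/\ 0 < i <= n, j <= m & x = Some (i, j)].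
Proof.
rewrite /verts in_cons => /orP[/eqP ->|]; first by left.
move=> /allpairsP[[i j] []]; rewrite !mem_iota /= => hi hj ->.
by right; exists i, j; split=> //; lia.
Qed.

Hypothesis n_gt0 : 0 < n.

Lemma edgesE : edges n m =
  [seq right_edge i j | i <- iota 1 n, j <- iota 0 m] ++
  [seq down_edge n i j | i <- iota 1 n, j <- iota 0 m.+1].
Proof.
rewrite /edges; congr (_ ++ _).
have -> : iota 1 n = rcons (iota 1 n.-1) n.
  by rewrite -cats1 -{1}(prednK n_gt0) -[n.-1.+1]addn1 iotaD add1n prednK.
rewrite allpairs_rcons; congr (_ ++ _).
  apply/eq_in_allpairs => i j; rewrite mem_iota /down_edge => /andP[_ /= hi] _.
  by rewrite ifT //; lia.
by apply: eq_map => j; rewrite /down_edge ltnn.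
Qed.

Lemma eq_on_edges (f g : edge -> nat) :
  (forall e, e \notin edges n m -> f e = g e) ->
  (forall i j, 0 < i <= n -> j < m -> f (right_edge i j) = g (right_edge i j)) ->
  (forall i j, 0 < i <= n -> j <= m -> f (down_edge n i j) = g (down_edge n i j)) ->
  f = g.
Proof.
move=> off hr hd; apply: functional_extensionality => e.
case: (boolP (e \in edges n m)) => [|/off //].
rewrite edgesE mem_cat => /orP[] /allpairsP[[i j] []]; rewrite !mem_iota /= => hi hj ->;
  [apply: hr | apply: hd]; lia.
Qed.

Section EdgeSums.
Variables (V : nmodType) (F : edge -> V).
Local Open Scope ring_scope.

Lemma sum_out_edges i j : (0 < i <= n)%N -> (j <= m)%N ->
  \sum_(e <- edges n m | e.1 == Some (i, j)) F e
   = (if (j < m)%N then F (right_edge i j) else 0) + F (down_edge n i j).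
Proof.
move=> hi hj; rewrite edgesE big_cat.
rewrite !(sum_allpairs_pred1 true i j) ?iota_uniq // !mem_iota.
have -> : (0 < i < 1 + n)%N by lia.
by rewrite add0n ltnS hj.
Qed.

Lemma sum_in_edges i j : (0 < i <= n)%N -> (j <= m)%N ->
  \sum_(e <- edges n m | e.2 == Some (i, j)) F e
   = (if (0 < j)%N then F (right_edge i j.-1) else 0)
     + (if (1 < i)%N then F (down_edge n i.-1 j) else 0).
Proof.
move=> hi hj; rewrite edgesE big_cat.
rewrite (sum_allpairs_pred1 (0 < j)%N i j.-1) ?iota_uniq //; last first.
  by move=> x y _ /=; rewrite eq_vertex; lia.
rewrite (sum_allpairs_pred1 (1 < i)%N i.-1 j) ?iota_uniq //; last first.
  move=> x y; rewrite mem_iota /down_edge /= => hx.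
  by case: ifP => hxn; [rewrite eq_vertex | rewrite eqE /=]; lia.
rewrite !mem_iota (_ : [&& _, _, _ & _] = (0 < j)%N); last lia.
by rewrite (_ : [&& _, _, _ & _] = (1 < i)%N); last lia.
Qed.

Lemma sum_out_sink : \sum_(e <- edges n m | e.1 == None) F e = 0.
Proof.
rewrite big_hasC //; apply/hasPn => e; rewrite edgesE mem_cat.
by case/orP => /allpairsP[[i j] [_ _ ->]].
Qed.

Lemma sum_into_sink :
  \sum_(e <- edges n m | e.2 == None) F e = \sum_(j <- iota 0 m.+1) F (down_edge n n j).
Proof.
rewrite edgesE big_cat big_hasC ?Monoid.simpm; last first.
  by apply/hasPn => e /allpairsP[[i j] [_ _ ->]].
rewrite big_mkcond big_allpairs_dep.
transitivity (\sum_(i <- iota 1 n)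
                if i == n then \sum_(j <- iota 0 m.+1) F (down_edge n i j) else 0).
  apply: eq_big_seq => i; rewrite mem_iota => hi.
  have to_sink j : ((down_edge n i j).2 == None) = (i == n).
    by rewrite /down_edge /=; case: ifP => hin; rewrite eqE /=; lia.
  under eq_bigr do rewrite to_sink.
  by case: (i == n); last rewrite big1.
by rewrite sum_seq_pred1 ?iota_uniq // mem_iota ifT //; lia.
Qed.
End EdgeSums.

Lemma mem_right_edge i j : 0 < i <= n -> j < m -> right_edge i j \in edges n m.
Proof.
move=> hi hj; rewrite edgesE mem_cat; apply/orP; left.
by apply: allpairs_f; rewrite mem_iota; lia.
Qed.

Lemma mem_down_edge i j : 0 < i <= n -> j <= m -> down_edge n i j \in edges n m.
Proof.
move=> hi hj; rewrite edgesE mem_cat; apply/orP; right.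
by apply: allpairs_f; rewrite mem_iota; lia.
Qed.

Lemma netflow_sink f :
  netflow n m f None = (- \sum_(j <- iota 0 m.+1) (f (down_edge n n j))%:Z)%R.
Proof. by rewrite /netflow sum_out_sink sum_into_sink sub0r. Qed.

End Edges.

Section Chains.
Variables (n m : nat) (a b : seq nat).

Definition is_chain (c : nat -> nat -> nat) : Prop :=
  [/\ forall i, i <= n -> c 0 i = psum a i,
      forall i, i <= n -> c m.+1 i = psum b i,
      forall k i, k <= m.+1 -> i < n -> c k i <= c k i.+1
    & forall k i, k <= m -> i <= n -> c k.+1 i <= c k i].

Section ChainTheory.
Variable c : nat -> nat -> nat.
Hypothesis c_chain : is_chain c.

Lemma chain_col0 k : k <= m.+1 -> c k 0 = 0.
Proof.
case: c_chain => c0 _ _ cdecr; elim: k => [|k IH] hk; first by rewrite c0 // /psum big_ord0.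
by move: (cdecr k 0 hk (leq0n n)); rewrite IH ?(ltnW hk) // leqn0 => /eqP.
Qed.

Lemma chain_decr k k' i : k <= k' <= m.+1 -> i <= n -> c k' i <= c k i.
Proof.
case: c_chain => _ _ _ cdecr /andP[hk hk'] hi.
apply: (homo_leq_in (D := [pred k | k <= m.+1]) (f := c^~ i) (r := fun x y => y <= x)) (hk) => //.
- by move=> y x z /= hyx hzy; apply: leq_trans hzy hyx.
- by move=> x y hx hy z; rewrite !inE in hx hy *; lia.
- by move=> x _; rewrite !inE => hx; apply: cdecr.
- by rewrite inE; lia.
Qed.

Lemma chain_incr k i i' : i <= i' <= n -> k <= m.+1 -> c k i <= c k i'.
Proof.
case: c_chain => _ _ cincr _ /andP[hi hi'] hk.
apply: (homo_leq_in (D := [pred i | i <= n]) (f := c k) (r := fun x y => x <= y)) (hi) => //.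
- by move=> y x z; apply: leq_trans.
- by move=> x y hx hy z; rewrite !inE in hx hy *; lia.
- by move=> x _; rewrite !inE => hx; apply: cincr.
- by rewrite inE; lia.
Qed.

Lemma chain_bounds k i : k <= m.+1 -> i <= n -> psum b i <= c k i <= psum a i.
Proof.
case: c_chain => c0 ctop _ _ hk hi.
by rewrite -c0 // -ctop // !chain_decr //; lia.
Qed.

End ChainTheory.

Section Flows.
Hypothesis n_gt0 : 0 < n.

(* The flow entering column k in row t+1; the supplies a and the demands b play the
   roles of columns 0 and m+1. *)
Definition hflow (f : edge -> nat) (k t : nat) : nat :=
  if k == 0 then nth 0 a t else if k == m.+1 then nth 0 b t
  else f (right_edge t.+1 k.-1).

Definition flow_of_chain (c : nat -> nat -> nat) (e : edge) : nat :=
  if e \in edges n m then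
    match e with
    | (Some (i, j), Some (i', _)) =>
        if i' == i then c j.+1 i - c j.+1 i.-1 else c j i - c j.+1 i
    | (Some (i, j), None) => c j i - c j.+1 i
    | (None, _) => 0
    end
  else 0.

Lemma flow_of_chain_right c i j : 0 < i <= n -> j < m ->
  flow_of_chain c (right_edge i j) = c j.+1 i - c j.+1 i.-1.
Proof. by move=> hi hj; rewrite /flow_of_chain mem_right_edge //= eqxx. Qed.

Lemma flow_of_chain_down c i j : 0 < i <= n -> j <= m ->
  flow_of_chain c (down_edge n i j) = c j i - c j.+1 i.
Proof.
move=> hi hj; rewrite /flow_of_chain mem_down_edge //= /down_edge.
by case: ifP => //= _; rewrite ifF //; lia.
Qed.

Lemma eq_flow_of_chain c c' :
  (forall k i, k <= m.+1 -> i <= n -> c k i = c' k i) ->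
  flow_of_chain c = flow_of_chain c'.
Proof.
move=> cc'; apply: (eq_on_edges (m := m) n_gt0) => [e he | i j hi hj | i j hi hj].
- by rewrite /flow_of_chain (negbTE he).
- by rewrite !flow_of_chain_right // !cc' //; lia.
- by rewrite !flow_of_chain_down // !cc' //; lia.
Qed.

Lemma hflow_flow_of_chain c k i : is_chain c -> k <= m.+1 -> i < n ->
  hflow (flow_of_chain c) k i = c k i.+1 - c k i.
Proof.
case=> c0 ctop _ _ hk hi; rewrite /hflow.
case: eqP => [-> | k_neq0]; first by rewrite c0 // c0 1?ltnW // psumS addKn.
case: eqP => [-> | k_neqm]; first by rewrite ctop // ctop 1?ltnW // psumS addKn.
by rewrite flow_of_chain_right /= ?prednK //; lia.
Qed.

Definition chain_of_flow (f : edge -> nat) (k i : nat) : nat := \sum_(t < i) hflow f k t.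

Lemma chain_of_flow_of_chain c : is_chain c ->
  forall k i, k <= m.+1 -> i <= n -> chain_of_flow (flow_of_chain c) k i = c k i.
Proof.
move=> c_chain k i hk hi; rewrite /chain_of_flow -(big_mkord xpredT).
rewrite (eq_big_nat _ _ (F2 := fun t => c k t.+1 - c k t)); last first.
  by move=> t ht; rewrite hflow_flow_of_chain //; lia.
rewrite telescope_sumn_in // ?(chain_col0 c_chain) ?subn0 // => t ht.
by apply: (chain_incr c_chain); lia.
Qed.

Hypothesis m_gt0 : 0 < m.

Lemma netflow_vertexP f i j : 0 < i <= n -> j <= m ->
  netflow n m f (Some (i, j)) = demand n m a b (Some (i, j)) <->
  hflow f j.+1 i.-1 + f (down_edge n i j)
  = hflow f j i.-1 + (if 1 < i then f (down_edge n i.-1 j) else 0).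
Proof.
move=> hi hj; rewrite /netflow sum_out_edges // sum_in_edges // /demand /hflow /=.
rewrite prednK; last lia.
(* [demand] is written in ring scope, so the default value of its [nth] is [0%R : nat]. *)
rewrite -[(0%R : nat)]/0%N.
by repeat case: ifP => ?; lia.
Qed.

Lemma flow_of_chain_flow c : is_chain c -> is_int_flow n m a b (flow_of_chain c).
Proof.
move=> c_chain; have [c0 ctop _ _] := c_chain.
split=> [e he | x /vertsP[-> | [i [j [hi hj ->]]]]].
- by rewrite /flow_of_chain (negbTE he).
- rewrite netflow_sink // /demand (_ : iota 0 m.+1 = index_iota 0 m.+1) //.
  rewrite (eq_big_seq (fun j => - ((c j.+1 n)%:Z - (c j n)%:Z))%R); last first.
    move=> j; rewrite mem_iota => hj; rewrite flow_of_chain_down //; last lia.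
    by have := chain_decr c_chain (_ : j <= j.+1 <= m.+1) (leqnn n); lia.
  by rewrite sumrN opprK telescope_sumr // ctop // c0 // addrC.
- have incr k : k <= m.+1 -> c k i.-1 <= c k i.
    by move=> hk; apply: (chain_incr c_chain); lia.
  have decr i' : i' <= n -> c j.+1 i' <= c j i'.
    by move=> hi'; apply: (chain_decr c_chain); lia.
  apply/netflow_vertexP => //.
  rewrite !hflow_flow_of_chain ?prednK ?(flow_of_chain_down c hi hj) //; try lia.
  have := incr j; have := incr j.+1; have := decr i; have := decr i.-1.
  case: (ltnP 1 i) => hi1; first by rewrite flow_of_chain_down //; lia.
  have -> : i.-1 = 0 by lia.
  by rewrite !(chain_col0 c_chain) //; lia.
Qed.

Section FlowToChain.
Variable f : edge -> nat.
Hypothesis f_flow : is_int_flow n m a b f.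

Lemma chain_of_flowS k i : chain_of_flow f k i.+1 = chain_of_flow f k i + hflow f k i.
Proof. by rewrite /chain_of_flow big_ord_recr. Qed.

Lemma chain_of_flow_down i j : 0 < i <= n -> j <= m ->
  chain_of_flow f j.+1 i + f (down_edge n i j) = chain_of_flow f j i.
Proof.
move=> + hj; elim: i => [// | i IH] hi.
have /netflow_vertexP := proj2 f_flow _ (mem_verts hi hj).
move=> /(_ hi hj); rewrite (chain_of_flowS j.+1) (chain_of_flowS j) /=.
case: i IH hi => [|i] IH hi; first by rewrite /chain_of_flow !big_ord0 /=; lia.
by rewrite ltnS ltn0Sn; have := IH ltac:(lia); lia.
Qed.

Lemma chain_of_flow_chain : is_chain (chain_of_flow f).
Proof.
split=> [i _ | i _ | k i _ _ | k i hk hi].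
- by apply: eq_bigr.
- by apply: eq_bigr => t _; rewrite /hflow eqxx.
- by rewrite chain_of_flowS leq_addr.
- case: i hi => [|i] hi; first by rewrite /chain_of_flow !big_ord0.
  by rewrite -(chain_of_flow_down _ hk) ?leq_addr.
Qed.

Lemma flow_of_chain_of_flow : flow_of_chain (chain_of_flow f) = f.
Proof.
apply: (eq_on_edges (m := m) n_gt0) => [e he | i j hi hj | i j hi hj].
- by rewrite /flow_of_chain (negbTE he) (proj1 f_flow).
- rewrite flow_of_chain_right // -{1}(prednK (_ : 0 < i)) ?chain_of_flowS ?addKn; last lia.
  by rewrite /hflow ifF ?ifF ?prednK //; lia.
- by rewrite flow_of_chain_down // -(chain_of_flow_down hi hj) addKn.
Qed.

End FlowToChain.

End Flows.

Section PlanePartitions.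

Definition level_row (p : nat -> nat -> nat) (k r : nat) : nat :=
  mu n b r + count (fun j => k <= p r j) (iota (mu n b r).+1 (lam n a r - mu n b r)).

Definition chain_of_pp (p : nat -> nat -> nat) (k i : nat) : nat := level_row p k (n.+1 - i).

Definition pp_of_chain (c : nat -> nat -> nat) (r j : nat) : nat :=
  if in_shape n a b r j then count (fun k => j <= c k (n.+1 - r)) (iota 1 m) else 0.

Lemma lamE i : i <= n.+1 -> lam n a (n.+1 - i) = psum a i.
Proof. by move=> hi; rewrite /lam subKn. Qed.

Lemma muE i : i <= n.+1 -> mu n b (n.+1 - i) = psum b i.
Proof. by move=> hi; rewrite /mu subKn. Qed.

Lemma lam_decr r : lam n a r.+1 <= lam n a r.
Proof. by apply: psum_mono; lia. Qed.

Lemma mu_decr r : mu n b r.+1 <= mu n b r.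
Proof. by apply: psum_mono; lia. Qed.

Lemma in_shapeE r j : 0 < r <= n -> in_shape n a b r j = (mu n b r < j <= lam n a r).
Proof. by move=> hr; rewrite /in_shape hr. Qed.

Lemma in_shape_row r j : 0 < r ->
  j \in iota (mu n b r).+1 (lam n a r - mu n b r) -> in_shape n a b r j.
Proof.
move=> hr; rewrite mem_iota /in_shape => hj.
have : n.+1 - r != 0 by apply: contraTneq hj => r_big; rewrite /lam r_big /psum big_ord0; lia.
lia.
Qed.

Lemma eq_pp_of_chain c c' :
  (forall k i, k <= m.+1 -> i <= n -> c k i = c' k i) ->
  pp_of_chain c = pp_of_chain c'.
Proof.
move=> cc'; apply: functional_extensionality => r; apply: functional_extensionality => j.
rewrite /pp_of_chain; case: ifP => // /andP[hr _].
by apply: eq_in_count => k; rewrite mem_iota /= => hk; rewrite cc' //; lia.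
Qed.

Lemma pp_of_chain_pp c : is_chain c -> is_pp n m a b (pp_of_chain c).
Proof.
move=> c_chain; split=> [r j hs | r j hs | r j j' hs hs' hjj | r r' j hs hs' hrr].
- by rewrite /pp_of_chain (negbTE hs).
- rewrite /pp_of_chain hs.
  by have := count_size (fun k => j <= c k (n.+1 - r)) (iota 1 m); rewrite size_iota.
- rewrite /pp_of_chain hs hs'; apply: sub_count => k /=; exact: leq_trans.
- rewrite /pp_of_chain hs hs'; apply: sub_in_count => k; rewrite mem_iota => hk /= hjk.
  apply: leq_trans hjk _; apply: (chain_incr c_chain); move: hs hs'; rewrite /in_shape; lia.
Qed.

Lemma pp_of_chainP c k r j : is_chain c -> 0 < k <= m -> in_shape n a b r j ->
  (k <= pp_of_chain c r j) = (j <= c k (n.+1 - r)).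
Proof.
move=> c_chain hk hs; rewrite /pp_of_chain hs.
have /andP[hr _] := hs.
rewrite (@count_iota_prefix (fun k => j <= c k (n.+1 - r)) 1 m k) ?add1n //.
move=> x y hxy hy /= hjy; apply: leq_trans hjy _; apply: (chain_decr c_chain); lia.
Qed.

Hypothesis dominance : forall i, i <= n -> psum b i <= psum a i.

Lemma mu_le_lam r : 0 < r -> mu n b r <= lam n a r.
Proof. by move=> hr; apply: dominance; lia. Qed.

Lemma level_row_bounds p k r : 0 < r -> mu n b r <= level_row p k r <= lam n a r.
Proof.
move=> hr; have := mu_le_lam hr; rewrite /level_row.
set row := iota _ _; have := count_size (fun j => k <= p r j) row.
by rewrite size_iota; lia.
Qed.

Section PlanePartitionToChain.
Variable p : nat -> nat -> nat.
Hypothesis p_pp : is_pp n m a b p.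

Lemma level_rowP k r j : in_shape n a b r j -> (k <= p r j) = (j <= level_row p k r).
Proof.
case: p_pp => _ _ prow _ hs; have /andP[hr hj] := hs.
rewrite (@count_iota_prefix (fun j => k <= p r j) (mu n b r).+1 (lam n a r - mu n b r) j).
- by rewrite /level_row addSn ltnS.
- move=> x y hxy hy /= ky; apply: (leq_trans ky); apply: prow; rewrite ?in_shapeE //; lia.
- by have := mu_le_lam (_ : 0 < r); lia.
Qed.

Lemma level_row_decr k r : 0 < r -> level_row p k r.+1 <= level_row p k r.
Proof.
case: p_pp => _ _ _ pcol hr; set j := level_row p k r.+1.
have [hj | hj] := leqP j (mu n b r); first by have := level_row_bounds p k hr; lia.
have /andP[mu_j j_lam] := level_row_bounds p k (ltn0Sn r).
have hs : in_shape n a b r.+1 j.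
  by apply: in_shape_row; rewrite // mem_iota; have := mu_decr r; lia.
have hs' : in_shape n a b r j.
  by apply: in_shape_row; rewrite // mem_iota; have := lam_decr r; lia.
have := level_rowP k hs; rewrite leqnn => kj.
by rewrite -(level_rowP k hs'); apply: leq_trans kj (pcol _ _ _ hs' hs (leqnSn r)).
Qed.

Lemma chain_of_pp_chain : is_chain (chain_of_pp p).
Proof.
case: (p_pp) => _ pbound _ _.
split=> [i hi | i hi | k i hk hi | k i hk hi]; rewrite /chain_of_pp /level_row.
- by rewrite (@eq_count _ _ predT) // count_predT size_iota subnKC ?mu_le_lam ?lamE //; lia.
- rewrite (@eq_in_count _ _ pred0) ?count_pred0 ?addn0; first by rewrite muE //; lia.
  have hr : 0 < n.+1 - i by lia.
  by move=> j /(in_shape_row hr) hs /=; rewrite ltnNge pbound.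
- by rewrite -/(level_row _ _ _) -/(level_row _ _ _) subSS subSn 1?level_row_decr //; lia.
- by rewrite leq_add2l; apply: sub_count => j /=; apply: ltnW.
Qed.

Lemma pp_of_chain_of_pp : pp_of_chain (chain_of_pp p) = p.
Proof.
case: (p_pp) => pzero pbound _ _.
apply: functional_extensionality => r; apply: functional_extensionality => j.
rewrite /pp_of_chain; case: ifP => hs; last by rewrite pzero // hs.
have /andP[hr _] := hs.
rewrite /chain_of_pp subKn; last lia.
rewrite (@eq_in_count _ _ (fun k => k <= p r j)); last by move=> k _; rewrite level_rowP.
by rewrite (count_leq_iota (s := 0)) ?subn0 //; have := pbound r j hs; lia.
Qed.

End PlanePartitionToChain.

Lemma chain_of_pp_of_chain c : is_chain c ->
  forall k i, k <= m.+1 -> i <= n -> chain_of_pp (pp_of_chain c) k i = c k i.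
Proof.
move=> c_chain k i hk hi; have [c0 ctop _ _] := c_chain.
have q_chain := chain_of_pp_chain (pp_of_chain_pp c_chain).
have [q0 qtop _ _] := q_chain.
have [-> | k_gt0] := posnP k; first by rewrite q0 // c0.
have [hmk | hkm] := ltnP m k.
  have -> : k = m.+1 by lia.
  by rewrite qtop // ctop.
have [-> | i_gt0] := posnP i; first by rewrite !(chain_col0 _ hk).
have hr : 0 < n.+1 - i by lia.
rewrite /chain_of_pp /level_row (@eq_in_count _ _ (fun j => j <= c k i)); last first.
  by move=> j /(in_shape_row hr) hs; rewrite pp_of_chainP ?subKn //; lia.
rewrite muE ?lamE; try lia.
have bounds := chain_bounds c_chain hk hi.
by rewrite count_leq_iota; lia.
Qed.

End PlanePartitions.

End Chains.

Theorem theorem3p7 (n m : nat) (a b : seq nat) :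
  0 < n -> 0 < m -> size a = n -> size b = n ->
  (forall i, i <= n -> psum b i <= psum a i) ->
  exists g : PP n m a b -> IntFlow n m a b, bijective g.
Proof.
(* The sizes of a and b are irrelevant: only their first n entries are ever read. *)
move=> n_gt0 m_gt0 _ _ dominance.
pose g (p : PP n m a b) : IntFlow n m a b :=
  exist _ _ (flow_of_chain_flow n_gt0 m_gt0 (chain_of_pp_chain dominance (proj2_sig p))).
pose h (f : IntFlow n m a b) : PP n m a b :=
  exist _ _ (pp_of_chain_pp (chain_of_flow_chain n_gt0 m_gt0 (proj2_sig f))).
exists g, h => [[p p_pp] | [f f_flow]]; apply: subset_eq_compat.
- have p_chain := chain_of_pp_chain dominance p_pp.
  by rewrite (eq_pp_of_chain _ _ (chain_of_flow_of_chain n_gt0 p_chain)) pp_of_chain_of_pp.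
- have f_chain := chain_of_flow_chain n_gt0 m_gt0 f_flow.
  by rewrite (eq_flow_of_chain n_gt0 (chain_of_pp_of_chain dominance f_chain))
     flow_of_chain_of_flow.
Qed.
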